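(* Let $\tau\subset\mathbb{Z}^n_{\ge0}$ be a B-facet which contains a standard basis vector $e_i$ (the point with $i$-th coordinate $1$ and all others $0$). Then $\tau$ is a $B_1$-facet: every point of $\tau$ other than $e_i$ has $i$-th coordinate $0$.
   Context: A $k$-simplex is a set of $k+1$ affinely independent points. A $k$-simplex $S\subset\mathbb{Z}^n_{\ge0}$ is a B-simplex if there is a coordinate index $i$ such that exactly $k$ of its vertices lie in $\{x_i=0\}$ and the remaining vertex has $i$-th coordinate $1$. A B-facet in $\mathbb{Z}^n_{\ge0}$ is a finite set $\tau\subset\mathbb{Z}^n_{\ge 0}$ whose affine span is a hyperplane $\{x:\langle a,x\rangle=b\}$ with all $a_j>0$, such that every $(n-1)$-simplex with vertices in $\tau$ is a B-simplex. A $B_1$-facet is one for which there is an index $i$ such that exactly one point of $\tau$ has nonzero $i$-th coordinate, that coordinate being $1$. *)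

From HB Require Import structures.
From mathcomp Require Import all_boot all_order all_algebra.
From mathcomp Require Import reals.
Set Implicit Arguments. Unset Strict Implicit. Unset Printing Implicit Defensive.
Import Order.TTheory GRing.Theory Num.Theory.
Local Open Scope ring_scope.

Definition pt (n : nat) := {ffun 'I_n -> nat}.

Definition e_vec (n : nat) (i : 'I_n) : pt n := [ffun j => nat_of_bool (j == i)].

Definition vecR (R : realType) (n : nat) (x : pt n) : 'rV[R]_n :=
  \row_j ((x j)%:R).

Definition aff_indep (R : realType) (n : nat) (S : seq (pt n)) : Prop :=
  uniq S /\
  forall c : pt n -> R,
    \sum_(v <- S) c v = 0 ->
    \sum_(v <- S) c v *: vecR R v = 0 ->
    forall v, v \in S -> c v = 0.

Definition B_simplex (R : realType) (n : nat) (S : seq (pt n)) : Prop :=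
  aff_indep R S /\
  exists i : 'I_n,
    count (fun v : pt n => v i == 0%N) S = (size S).-1 /\
    exists2 w, w \in S & w i = 1%N.

Definition in_aff_span (R : realType) (n : nat) (tau : seq (pt n)) (x : 'rV[R]_n) : Prop :=
  exists c : pt n -> R,
    \sum_(v <- tau) c v = 1 /\ x = \sum_(v <- tau) c v *: vecR R v.

Definition B_facet (R : realType) (n : nat) (tau : seq (pt n)) : Prop :=
  (exists (a : 'I_n -> R) (b : R),
      (forall j, 0 < a j) /\
      forall x : 'rV[R]_n, in_aff_span tau x <-> \sum_j a j * x 0 j = b) /\
  (forall S : seq (pt n),
      {subset S <= tau} -> size S = n -> aff_indep R S -> B_simplex R S).

Definition B1_facet (R : realType) (n : nat) (tau : seq (pt n)) : Prop :=
  B_facet R tau /\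
  exists i : 'I_n, exists2 p, p \in tau &
    p i = 1%N /\ forall q, q \in tau -> q i <> 0%N -> q = p.

(* Every point of tau lies on the hyperplane sum_j a_j x_j = b with all a_j > 0, and e_i
   forces b = a_i.  A nonnegative integer point x on this hyperplane with x_i >= 1 already
   spends a_i x_i >= a_i on the i-th coordinate, so x_i = 1 and all other coordinates
   vanish: x = e_i. *)
From HB Require Import structures.
From mathcomp Require Import all_boot all_order all_algebra.
From mathcomp Require Import reals.
From mathcomp Require Import lra.
Set Implicit Arguments. Unset Strict Implicit. Unset Printing Implicit Defensive.
Import Order.TTheory GRing.Theory Num.Theory.
Local Open Scope ring_scope.

Lemma sumr_pred1_count (T : eqType) (V : nmodType) (s : seq T) (p : T) (x : V) :
  \sum_(v <- s) (if v == p then x else 0) = x *+ count_mem p s.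
Proof. by rewrite -big_mkcond big_const_seq iter_addr_0. Qed.

(* Weight 1/m on p, where m is the multiplicity of p in the list tau. *)
Lemma mem_aff_span (R : realType) (n : nat) (tau : seq (pt n)) (p : pt n) :
  p \in tau -> in_aff_span tau (vecR R p).
Proof.
move=> p_tau; set m := count_mem p tau.
have m_neq0 : m%:R != 0 :> R by rewrite pnatr_eq0 -lt0n -has_count has_pred1.
exists (fun v => if v == p then m%:R^-1 else 0); split.
  by rewrite sumr_pred1_count -[LHS]mulr_natr mulVf.
rewrite (eq_bigr (fun v => if v == p then m%:R^-1 *: vecR R p else 0)).
  by rewrite sumr_pred1_count scalerMnl -[_ *+ _]mulr_natr mulVf // scale1r.
by move=> v _; case: eqP => [->|_]; rewrite ?scale0r.
Qed.

Lemma B_facet_hyperplane (R : realType) (n : nat) (tau : seq (pt n)) :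
  B_facet R tau ->
  exists (a : 'I_n -> R) (b : R), (forall j, 0 < a j) /\
    forall p, p \in tau -> \sum_j a j * (p j)%:R = b.
Proof.
case=> [[a [b [a_gt0 span_eq]]] _]; exists a, b; split=> // p p_tau.
have := (span_eq (vecR R p)).1 (mem_aff_span R p_tau).
by under eq_bigr do rewrite mxE.
Qed.

Lemma sum_mul_e_vec (R : nzSemiRingType) (n : nat) (a : 'I_n -> R) (i : 'I_n) :
  \sum_j a j * (e_vec i j)%:R = a i.
Proof.
rewrite (bigD1 i) //= big1 => [|j /negbTE ji]; rewrite ffunE ?eqxx ?ji.
  by rewrite mulr1 addr0.
by rewrite mulr0.
Qed.

Lemma eq_e_vec_on_hyperplane (R : realFieldType) (n : nat) (a : 'I_n -> R)
    (i : 'I_n) (x : pt n) :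
  (forall j, 0 < a j) -> \sum_j a j * (x j)%:R = a i -> x i != 0%N -> x = e_vec i.
Proof.
move=> a_gt0; rewrite (bigD1 i) //=; set rest := \sum_(j | j != i) _ => sum_eq xi_neq0.
have terms_ge0 j : j != i -> 0 <= a j * (x j)%:R.
  by rewrite mulr_ge0 ?ler0n ?ltW.
have rest_ge0 : 0 <= rest by apply: sumr_ge0.
have ai_le : a i <= a i * (x i)%:R by rewrite ler_pMr // ler1n lt0n.
have rest0 : rest = 0 by lra.
have xi1 : x i = 1%N.
  apply/eqP; rewrite -(eqr_nat R) -(inj_eq (mulfI (lt0r_neq0 (a_gt0 i)))) mulr1.
  by apply/eqP; lra.
have rest_terms0 := psumr_eq0P terms_ge0 rest0.
apply/ffunP => j; rewrite ffunE; have [-> | ji] := eqVneq j i; first by rewrite xi1.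
have /eqP := rest_terms0 j ji.
by rewrite mulf_eq0 (negbTE (lt0r_neq0 (a_gt0 j))) pnatr_eq0 => /eqP.
Qed.

Lemma B_facet_coord_neq0 (R : realType) (n : nat) (tau : seq (pt n)) (i : 'I_n) :
  B_facet R tau -> e_vec i \in tau ->
  forall x, x \in tau -> x i != 0%N -> x = e_vec i.
Proof.
move=> /B_facet_hyperplane [a [b [a_gt0 on_hyp]]] ei_tau x x_tau.
apply: eq_e_vec_on_hyperplane a_gt0 _.
by rewrite on_hyp // -(on_hyp _ ei_tau) sum_mul_e_vec.
Qed.

Theorem claim2p5 (R : realType) (n : nat) (tau : seq (pt n)) (i : 'I_n) :
  B_facet R tau -> e_vec i \in tau ->
  B1_facet R tau /\
  (forall x, x \in tau -> x != e_vec i -> x i = 0%N).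
Proof.
move=> facet ei_tau; have only_ei := B_facet_coord_neq0 facet ei_tau.
split.
  split=> //; exists i; exists (e_vec i) => //; split; first by rewrite ffunE eqxx.
  by move=> q q_tau /eqP; apply: only_ei.
move=> x x_tau x_neq; apply/eqP; apply: contraNT x_neq => xi_neq0.
by rewrite (only_ei x x_tau xi_neq0).
Qed.
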